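(* $\mathsf{AP}(R_2,R_2)=\operatorname{Pol}(R_2,R'_2)=\mathsf{I}$.
   Context: Tuples in $\{0,1\}^4$ are written as strings $abcd$. The relations $R_1,\dots,R_5\subseteq\{0,1\}^4$ are $R_1=\{0000,1000,0100,1100,1010,0110,1001,0101,0011,1011,0111,1111\}$, $R_2=\{0000,1000,0100,1100,1010,0101,0011,1111\}$, $R_3=\{0000,1100,1010,0101,0011,1011,0111,1111\}$, $R_4=\{0000,1100,1010,0101,0011,1111\}$, $R_5=\{0000,1100,1010,0110,1001,0101,0011,1111\}$. For $R,S\subseteq\{0,1\}^4$, a Boolean function $f\colon\{0,1\}^n\to\{0,1\}$ is analogy-preserving relative to $(R,S)$ if for all $\mathbf{a},\mathbf{b},\mathbf{c},\mathbf{d}\in\{0,1\}^n$ with $(a_i,b_i,c_i,d_i)\in R$ for every $i$ and such that $(f(\mathbf{a}),f(\mathbf{b}),f(\mathbf{c}),x)\in S$ for some $x\in\{0,1\}$, we have $(f(\mathbf{a}),f(\mathbf{b}),f(\mathbf{c}),f(\mathbf{d}))\in S$; $\mathsf{AP}(R,S)$ is the set of all such functions of all arities. $S':=S\cup\{(a,b,c,d)\mid\nexists x\colon(a,b,c,x)\in S\}$, and $\operatorname{Pol}(R,S)$ is the set of Boolean functions $f$ with $f(\mathbf{a}_1,\dots,\mathbf{a}_n)\in S$ (componentwise) for all $\mathbf{a}_1,\dots,\mathbf{a}_n\in R$. $\mathsf{I}$ is the set of all Boolean functions (of all arities) that are constant or a projection. *)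

From mathcomp Require Import all_boot.
Set Implicit Arguments. Unset Strict Implicit. Unset Printing Implicit Defensive.

(* A 4-tuple abcd in {0,1}^4 is (a,b,c,d) : bool*bool*bool*bool, 1 = true. *)
Definition quad := (bool * bool * bool * bool)%type.
Definition rel4 := quad -> bool.

Definition rel_of (s : seq quad) : rel4 := fun q => q \in s.

Definition R2 : rel4 := rel_of
  [:: (false,false,false,false); (true,false,false,false);
      (false,true,false,false);  (true,true,false,false);
      (true,false,true,false);   (false,true,false,true);
      (false,false,true,true);   (true,true,true,true)].

Definition rel_prime (S : rel4) : rel4 :=
  fun q => let: (a,b,c,d) := q in S q || ~~ [exists x : bool, S (a,b,c,x)].

Definition boolfun n := n.-tuple bool -> bool.

Definition compR (R : rel4) n (a b c d : n.-tuple bool) : Prop :=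
  forall i : 'I_n, R (tnth a i, tnth b i, tnth c i, tnth d i).

Definition AP (R S : rel4) n (f : boolfun n) : Prop :=
  forall a b c d : n.-tuple bool, compR R a b c d ->
    (exists x : bool, S (f a, f b, f c, x)) ->
    S (f a, f b, f c, f d).

(* Pol(R,S): f applied componentwise to n tuples of R lies in S.  Writing the
   n tuples of R as the columns of a 4 x n matrix with rows a,b,c,d. *)
Definition Pol (R S : rel4) n (f : boolfun n) : Prop :=
  forall a b c d : n.-tuple bool, compR R a b c d -> S (f a, f b, f c, f d).

Definition Iclone n (f : boolfun n) : Prop :=
  (exists c : bool, forall x, f x = c) \/
  (exists i : 'I_n, forall x, f x = tnth x i).

(* AP(R, S) = Pol(R, S') holds for arbitrary R and S.  For a polymorphism f
   of (R2, R2') four column patterns do the work: f is constant unless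
   f(0...0) = 0 and f(1...1) = 1, and in that case f is self-dual and its
   true set is closed under meets and upward closed, i.e. an ultrafilter on
   the coordinates.  A true tuple x of minimal support contains a coordinate
   i whose unit vector e_i is true (otherwise the meet of x with the
   complement of e_i would be a smaller true tuple), so f is the projection
   onto i. *)
From mathcomp Require Import all_boot.

Lemma AP_iff_Pol_rel_prime (R S : rel4) n (f : boolfun n) :
  AP R S f <-> Pol R (rel_prime S) f.
Proof.
split=> fP a b c d abcdR.
  rewrite /rel_prime; case: existsP => [[x Sx] | _]; last by rewrite orbT.
  by rewrite fP //; exists x.
move=> [x Sx]; move: (fP a b c d abcdR); rewrite /rel_prime.
by case: (S _) => //= /existsP []; exists x.
Qed.

Lemma Iclone_Pol (R S : rel4) n (f : boolfun n) :
  (forall q, R q -> S q) -> (forall c, S (c, c, c, c)) ->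
  Iclone f -> Pol R S f.
Proof.
move=> RS Sdiag [[c fc] | [i fi]] a b c' d abcdR; first by rewrite !fc; apply: Sdiag.
by rewrite !fi; apply: RS.
Qed.

Lemma existsbE (P : pred bool) : [exists x, P x] = P true || P false.
Proof.
apply/existsP/orP => [[[] Px] | [Pt | Pf]]; by [left | right | exists true | exists false].
Qed.

Lemma rel_prime_R2E a b c d :
  rel_prime R2 (a, b, c, d) = if ~~ a && b then true else d == c && (a == b).
Proof. by rewrite /rel_prime existsbE; case: a; case: b; case: c; case: d. Qed.

Section PolymorphismR2.

Variables (n : nat) (f : boolfun n).
Hypothesis fPol : Pol R2 (rel_prime R2) f.

Let const (b : bool) : n.-tuple bool := [tuple b | _ < n].
Let neg (x : n.-tuple bool) : n.-tuple bool := [tuple ~~ tnth x j | j < n].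
Let meet (x y : n.-tuple bool) : n.-tuple bool :=
  [tuple tnth x j && tnth y j | j < n].
Let unit_vec (i : 'I_n) : n.-tuple bool := [tuple j == i | j < n].

Lemma polR2E a b c d : compR R2 a b c d ->
  if ~~ f a && f b then true else f d == f c && (f a == f b).
Proof. by move=> abcdR; rewrite -rel_prime_R2E; apply: fPol. Qed.

Lemma pol_const_true : f (const false) = true -> forall x, f x = true.
Proof.
move=> f0 x; have: compR R2 (const false) x (const false) (const false).
  by move=> j; rewrite !tnth_mktuple; case: (tnth x j).
by move/polR2E; rewrite f0; case: (f x).
Qed.

Lemma pol_const_false :
  f (const false) = false -> f (const true) = false -> forall x, f x = false.
Proof.
move=> f0 f1 x; have: compR R2 (neg x) (const false) (const true) x.
  by move=> j; rewrite !tnth_mktuple; case: (tnth x j).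
by move/polR2E; rewrite f0 f1; case: (f x); case: (f (neg x)).
Qed.

Section Idempotent.

Hypotheses (f0 : f (const false) = false) (f1 : f (const true) = true).

Lemma pol_selfdual (x : n.-tuple bool) : f (neg x) = ~~ f x.
Proof.
have: compR R2 x (const false) (const true) (neg x).
  by move=> j; rewrite !tnth_mktuple; case: (tnth x j).
by move/polR2E; rewrite f0 f1; case: (f x); case: (f (neg x)).
Qed.

Lemma pol_meet (x y : n.-tuple bool) : f x -> f y -> f (meet x y).
Proof.
move=> fx fy; have: compR R2 x y x (meet x y).
  by move=> j; rewrite !tnth_mktuple; case: (tnth x j); case: (tnth y j).
by move/polR2E; rewrite fx fy; case: (f (meet x y)).
Qed.

Lemma pol_up (x y : n.-tuple bool) : (forall j, tnth x j -> tnth y j) -> f x -> f y.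
Proof.
move=> xy fx; have: compR R2 x (const true) x y.
  move=> j; rewrite !tnth_mktuple; move: (xy j).
  by case: (tnth x j); case: (tnth y j) => // /(_ isT).
by move/polR2E; rewrite fx f1; case: (f y).
Qed.

Lemma pol_unit_vec : exists i, f (unit_vec i).
Proof.
pose supp (x : n.-tuple bool) := [set j | tnth x j].
have [x fx xmin] := arg_minnP (fun x => #|supp x|) (f1 : f (const true)).
have [i xi] : exists i, tnth x i.
  apply/existsP; apply: contraT; rewrite negb_exists => /forallP x0.
  suff x_eq0 : x = const false by rewrite x_eq0 f0 in fx.
  by apply: eq_from_tnth => j; rewrite tnth_mktuple; apply/negbTE.
exists i; apply: contraT => fei.
have /xmin : f (meet x (neg (unit_vec i))) by rewrite pol_meet ?pol_selfdual.
suff -> : supp (meet x (neg (unit_vec i))) = supp x :\ i.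
  by rewrite (cardsD1 i) inE xi ltnn.
by apply/setP => j; rewrite !inE !tnth_mktuple andbC.
Qed.

Lemma pol_proj : exists i, forall x, f x = tnth x i.
Proof.
have [i fei] := pol_unit_vec; exists i => x.
have ei_le (y : n.-tuple bool) : tnth y i -> f y.
  by move=> yi; apply: pol_up fei => j; rewrite tnth_mktuple => /eqP ->.
case xi: (tnth x i); first exact: ei_le.
apply/negbTE; rewrite -pol_selfdual; apply: ei_le.
by rewrite tnth_mktuple xi.
Qed.

End Idempotent.

Lemma pol_Iclone : Iclone f.
Proof.
case f0: (f (const false)); first by left; exists true; apply: pol_const_true.
case f1: (f (const true)); first by right; apply: pol_proj.
by left; exists false; apply: pol_const_false.
Qed.

End PolymorphismR2.

Theorem mainTheorem8 :
  forall (n : nat) (f : boolfun n),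
    (AP R2 R2 f <-> Pol R2 (rel_prime R2) f) /\
    (Pol R2 (rel_prime R2) f <-> Iclone f).
Proof.
move=> n f; split; first exact: AP_iff_Pol_rel_prime.
split; first exact: pol_Iclone.
apply: Iclone_Pol => [[[[a b] c] d] R2q | c].
  by rewrite /rel_prime R2q.
by rewrite rel_prime_R2E; case: c.
Qed.
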